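(* Let $\mathfrak u$ be either an infinite sequence with all terms in $\{0,1\}$, or a finite sequence of length $N\ge1$ with all terms in $\{0,1\}$. Then $\Upsilon(\Upsilon(\mathfrak u))=\mathfrak u$. Consequently $\Upsilon^{(6)}(\mathfrak u)=\mathfrak u$, i.e. all levels of the discrete helicoid generated by $\mathfrak u$ coincide, and its base level consists of three copies (rotated about $a_0$ by multiples of $120^\circ$) of the rhombus formed by the P-G triangle generated by $\mathfrak u$ together with the P-G triangle generated by $\Upsilon(\mathfrak u)$, these two triangles being mirror images of each other across their common edge $\Upsilon(\mathfrak u)$.
   Context: For a finite or infinite sequence $\mathfrak u=(a_0,a_1,\dots)$ of non-negative integers, the P-G triangle generated by $\mathfrak u$ consists of the numbers $d_k^{(j)}$ defined by $d_k^{(0)}=a_k$ and $d_k^{(j+1)}=|d_{k+1}^{(j)}-d_k^{(j)}|$ for $j,k\ge 0$ (for a finite sequence $(a_0,\dots,a_{N-1})$, for $0\le k\le N-1-j$). The operator $\Upsilon$ sends $\mathfrak u$ to the left edge $(d_0^{(0)},d_0^{(1)},d_0^{(2)},\dots)$ of its P-G triangle (a sequence of the same length as $\mathfrak u$); $\Upsilon^{(n)}$ denotes its $n$-th iterate. Geometrically, the P-G triangle of $\Upsilon^{(k+1)}(\mathfrak u)$ is placed rotated by $60^\circ$ clockwise about $a_0$ relative to that of $\Upsilon^{(k)}(\mathfrak u)$, sharing the edge $\Upsilon^{(k+1)}(\mathfrak u)$; the six triangles for $k=0,\dots,5$ form the base level of the helicoid, and level $n+1$ is the base level generated by $\Upsilon^{(6n)}(\mathfrak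 u)$. *)

From mathcomp Require Import all_boot.
Set Implicit Arguments. Unset Strict Implicit. Unset Printing Implicit Defensive.

Definition absdiff (m n : nat) : nat := (m - n) + (n - m).

(* P-G triangle of an (infinite) sequence u : nat -> nat:
   pg u j k = d_k^{(j)}, with d_k^{(0)} = a_k and
   d_k^{(j+1)} = |d_{k+1}^{(j)} - d_k^{(j)}|. *)
Fixpoint pg (u : nat -> nat) (j : nat) (k : nat) {struct j} : nat :=
  match j with
  | 0 => u k
  | j'.+1 => absdiff (pg u j' k.+1) (pg u j' k)
  end.

Definition Ups (u : nat -> nat) : nat -> nat := fun j => pg u j 0.

(* Finite sequences (a_0,...,a_{N-1}) are lists s of size N.
   The P-G triangle entry d_k^{(j)} (for j + k <= N-1) only uses
   a_k,...,a_{k+j}, so it is computed from the padded sequence nth 0 s. *)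
Definition pgF (s : seq nat) (j k : nat) : nat := pg (nth 0 s) j k.

Definition UpsF (s : seq nat) : seq nat := mkseq (fun j => pgF s j 0) (size s).

(* Over bits, |a - b| is addition mod 2, so the rule d^(j+1)_k = |d^(j)_(k+1) - d^(j)_k|
   can be solved backwards: d^(j)_(k+1) = |d^(j+1)_k - d^(j)_k|.  Read along the left
   edge, this says that the P-G triangle of Ups u is the transpose of the P-G triangle
   of u (pg (Ups u) j k = pg u k j), proved by induction on j.  Taking k = 0 gives
   Ups (Ups u) = u, and 6n = 2(3n) iterations of an involution are the identity.

   For a finite sequence s of length N the entry d^(j)_k with j + k < N only reads
   a_0, ..., a_(N-1), so the finite statements follow from the infinite ones applied
   to the zero-padded sequence nth 0 s, once one knows that the padding of UpsF s
   agrees with Ups (nth 0 s) on the first N indices. *)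

From mathcomp Require Import all_boot.
From mathcomp Require Import zify.
From Stdlib Require Import FunctionalExtensionality.

Set Implicit Arguments.
Unset Strict Implicit.

Lemma absdiff_le1 a b : a <= 1 -> b <= 1 -> absdiff a b <= 1.
Proof. rewrite /absdiff; lia. Qed.

(* On bits, absdiff is addition mod 2, hence cancels: |(|a - b|) - b| = a. *)
Lemma absdiffK a b : a <= 1 -> b <= 1 -> absdiff (absdiff a b) b = a.
Proof. rewrite /absdiff; lia. Qed.

Lemma pg_le1 u : (forall i, u i <= 1) -> forall j k, pg u j k <= 1.
Proof. by move=> u01; elim=> [|j IHj] k //=; apply: absdiff_le1. Qed.

Lemma pg_Ups u : (forall i, u i <= 1) -> forall j k, pg (Ups u) j k = pg u k j.
Proof.
move=> u01; elim=> [|j IHj] k //=.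
by rewrite !IHj /= absdiffK //; apply: pg_le1.
Qed.

Lemma Ups_involutive u : (forall i, u i <= 1) -> Ups (Ups u) = u.
Proof. by move=> u01; apply: functional_extensionality => j; rewrite /Ups pg_Ups. Qed.

Lemma pg_local u v N : (forall i, i < N -> u i = v i) ->
  forall j k, j + k < N -> pg u j k = pg v j k.
Proof.
move=> uv; elim=> [|j IHj] k /= jkN; first by apply: uv; lia.
by rewrite !IHj //; lia.
Qed.

Lemma iter_even_involutive (T : Type) (f : T -> T) x :
  f (f x) = x -> forall n, iter (2 * n) f x = x.
Proof. by move=> ffx; elim=> [|n IHn] //; rewrite mulnS !iterS IHn ffx. Qed.

Lemma iter_six_involutive (T : Type) (f : T -> T) x :
  f (f x) = x -> forall n, iter (6 * n) f x = x.
Proof.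
move=> ffx n; have -> : 6 * n = 2 * (3 * n) by lia.
exact: iter_even_involutive.
Qed.

Lemma nth_le1 s : all (fun x => x <= 1) s -> forall i, nth 0 s i <= 1.
Proof.
move=> s01 i; case: (ltnP i (size s)) => iN; last by rewrite nth_default.
by move/allP: s01; apply; rewrite mem_nth.
Qed.

Lemma nth_UpsF s i : i < size s -> nth 0 (UpsF s) i = Ups (nth 0 s) i.
Proof. by move=> iN; rewrite /UpsF nth_mkseq. Qed.

Lemma pgF_UpsF s : all (fun x => x <= 1) s ->
  forall j k, j + k < size s -> pgF (UpsF s) j k = pgF s k j.
Proof.
move=> s01 j k jkN; rewrite /pgF -(pg_Ups (nth_le1 s01)).
by apply: (pg_local (N := size s)) => // i; apply: nth_UpsF.
Qed.

Lemma UpsF_involutive s : all (fun x => x <= 1) s -> UpsF (UpsF s) = s.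
Proof.
move=> s01; apply: (@eq_from_nth _ 0); first by rewrite !size_mkseq.
rewrite !size_mkseq => i iN; rewrite nth_mkseq ?size_mkseq //.
by rewrite -/(pgF (UpsF s) i 0) (pgF_UpsF s01) ?addn0.
Qed.

Theorem theorem2p4 :
  (forall u : nat -> nat, (forall i, u i <= 1) ->
     [/\ Ups (Ups u) = u,
         (forall n, iter (6 * n) Ups u = u) &
         (forall j k, pg (Ups u) j k = pg u k j)])
  /\
  (forall s : seq nat, 0 < size s -> all (fun x => x <= 1) s ->
     [/\ UpsF (UpsF s) = s,
         (forall n, iter (6 * n) UpsF s = s) &
         (forall j k, j + k < size s -> pgF (UpsF s) j k = pgF s k j)]).
Proof.
split=> [u u01 | s _ s01].
  have UUu := Ups_involutive u01.
  by split; [exact: UUu | exact: iter_six_involutive UUu | exact: pg_Ups].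
have UUs := UpsF_involutive s01.
by split; [exact: UUs | exact: iter_six_involutive UUs | exact: pgF_UpsF].
Qed.
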